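(* Let $E,F$ be PVMs on a finite-dimensional Hilbert space with $E\le F$, and let $\rho$ be a density operator commuting with $E$. Then $$D(\rho\|\mathcal E_F(\rho))\le\log w(E).$$
   Context: $D(\rho\|\sigma)=\mathrm{Tr}\rho(\log\rho-\log\sigma)$. For PVMs $E=\{E_i\}$, $F=\{F_j\}$, $E\le F$ means each $E_i$ is a sum of some $F_j$; $\rho$ commutes with $E$ if $\rho E_i=E_i\rho$ for all $i$; $w(E)=\sup_i\dim(\mathrm{range}\,E_i)$; $\mathcal E_F(\rho)=\sum_jF_j\rho F_j$. *)

From HB Require Import structures.
From mathcomp Require Import all_boot all_order all_algebra.
From mathcomp Require Import complex.
From mathcomp Require Import reals constructive_ereal exp.
From Stdlib Require Import ClassicalEpsilon.
Set Implicit Arguments. Unset Strict Implicit. Unset Printing Implicit Defensive.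
Import Order.TTheory GRing.Theory Num.Theory.
Local Open Scope ring_scope.

Section QDefs.
Variables (R : realType) (n : nat).
Local Notation C := (R[i]).
Local Notation M := ('M[C]_n).

Definition adjmx (m p : nat) (A : 'M[C]_(m, p)) : 'M[C]_(p, m) :=
  (map_mx Num.conj A)^T.

Definition hermitian (A : M) : Prop := adjmx A = A.

Definition unitary (U : M) : Prop := U *m adjmx U = 1%:M.

Definition orth_proj (P : M) : Prop := P *m P = P /\ adjmx P = P.

Definition is_PVM (I : finType) (E : I -> M) : Prop :=
  (forall i, orth_proj (E i)) /\ \sum_(i : I) E i = 1%:M.

Definition pvm_le (I J : finType) (E : I -> M) (F : J -> M) : Prop :=
  forall i, exists S : {set J}, E i = \sum_(j in S) F j.

Definition psd (A : M) : Prop :=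
  hermitian A /\ forall v : 'cV[C]_n, 0 <= (adjmx v *m A *m v) 0 0.

Definition density (rho : M) : Prop := psd rho /\ \tr rho = 1.

Definition commutes_with (I : finType) (rho : M) (E : I -> M) : Prop :=
  forall i, rho *m E i = E i *m rho.

Definition width (I : finType) (E : I -> M) : nat := \max_(i : I) \rank (E i).

Definition pinch (J : finType) (F : J -> M) (rho : M) : M :=
  \sum_(j : J) F j *m rho *m F j.

Definition spectral (A U : M) (d : 'rV[R]_n) : Prop :=
  unitary U /\ A = U *m diag_mx (map_mx (fun x : R => (x%:C)%C) d) *m adjmx U.

(* functional calculus f(A) = U diag(f(d)) U^* for a (chosen) spectral
   decomposition of A; 0 if A has none (never happens for Hermitian A). *)
Definition mxfun (f : R -> R) (A : M) : M :=
  match excluded_middle_informative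
          (exists p : M * 'rV[R]_n, spectral A p.1 p.2) with
  | left h =>
      let p := proj1_sig (constructive_indefinite_description _ h) in
      p.1 *m diag_mx (map_mx (fun x : R => ((f x)%:C)%C) p.2) *m adjmx p.1
  | right _ => 0
  end.

Definition mxlog (A : M) : M := mxfun (@ln R) A.

(* Umegaki relative entropy D(rho||sigma) = Tr rho (log rho - log sigma) if
   supp rho <= supp sigma (i.e. ker sigma <= ker rho), +oo otherwise. *)
Definition relent (rho sigma : M) : \bar R :=
  if (kermx sigma <= kermx rho)%MS
  then (complex.Re (\tr (rho *m (mxlog rho - mxlog sigma))))%:E
  else +oo%E.

End QDefs.

(* Diagonalise rho = sum_k la_k u_k u_k^* and sigma = E_F(rho) = sum_l mu_l v_l v_l^*.  Since
   log sigma commutes with every F_j, Tr rho log sigma = Tr sigma log sigma, so the relative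
   entropy equals sum_k la_k ln la_k - sum_l mu_l ln mu_l.  The weights b_ik = <u_k, E_i u_k>
   and a_il = <v_l, E_i v_l> sum to 1 over i, sum_l a_il = rank E_i <= w(E), and both give the
   block E_i the same mass p_i = Tr E_i rho = Tr E_i sigma, because E <= F makes each E_i
   commute with the F_j.  As E_i commutes with rho, sum_k b_ik la_k^2 = Tr E_i rho^2 <= p_i^2,
   which with ln x <= x - 1 gives sum_k b_ik la_k ln la_k <= p_i ln p_i, while the log-sum
   inequality gives sum_l a_il mu_l ln mu_l >= p_i ln (p_i / w(E)).  Summing over i leaves
   ln w(E).  The support condition ker sigma <= ker rho follows by writing rho = S^* S. *)

From Pilot Require Import Defs.
From HB Require Import structures.
From mathcomp Require Import all_boot all_order all_algebra.
From mathcomp Require Import complex.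
From mathcomp Require Import reals constructive_ereal exp.
From mathcomp Require Import sesquilinear spectral.
From mathcomp Require Import ring.
From Stdlib Require Import ClassicalEpsilon.
Set Implicit Arguments. Unset Strict Implicit. Unset Printing Implicit Defensive.
Import Order.TTheory GRing.Theory Num.Theory.
Local Open Scope ring_scope.

Local Notation diagR d := (diag_mx (map_mx (fun x => (x%:C)%C) d)).
Local Notation diagf f d := (diag_mx (map_mx (fun x => ((f x)%:C)%C) d)).

Section EntropyInequalities.
Variable R : realType.

Lemma ln_le_subr1 (x : R) : 0 < x -> ln x <= x - 1.
Proof.
move=> x_gt0; have := @le_ln1Dx R (x - 1).
by rewrite addrCA subrr addr0; apply; rewrite ltrBrDl subrr.
Qed.

Lemma weighted_xlnx_le (K : finType) (b la : K -> R) :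
  (forall k, 0 <= b k) -> (forall k, 0 <= la k) ->
  \sum_k b k * la k ^+ 2 <= (\sum_k b k * la k) ^+ 2 ->
  \sum_k b k * la k * ln (la k) <= (\sum_k b k * la k) * ln (\sum_k b k * la k).
Proof.
move=> b_ge0 la_ge0; set p := \sum_k b k * la k => sq_le.
have bla_ge0 k : 0 <= b k * la k by rewrite mulr_ge0.
have [p0|p_neq0] := eqVneq p 0.
  rewrite p0 mul0r big1 // => k _.
  by rewrite (psumr_eq0P (fun k _ => bla_ge0 k) p0) ?mul0r.
have p_gt0 : 0 < p by rewrite lt_def p_neq0 sumr_ge0.
rewrite -subr_le0 {1}/p mulr_suml -sumrB.
apply: le_trans (_ : \sum_k (b k * la k ^+ 2 / p - b k * la k) <= 0).
  apply: ler_sum => k _; rewrite -mulrBr.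
  have [->|la_neq0] := eqVneq (la k) 0; first by rewrite expr0n !(mulr0, mul0r) subrr.
  have la_gt0 : 0 < la k by rewrite lt_def la_neq0 la_ge0.
  rewrite -ln_div ?posrE //.
  apply: le_trans (ler_wpM2l (bla_ge0 k) (ln_le_subr1 (divr_gt0 la_gt0 p_gt0))) _.
  by rewrite mulrBr mulr1 expr2 !mulrA.
by rewrite sumrB -mulr_suml subr_le0 ler_pdivrMr // -expr2.
Qed.

Lemma log_sum_le (L : finType) (a mu : L -> R) (w : R) :
  (forall l, 0 <= a l) -> (forall l, 0 <= mu l) -> \sum_l a l <= w ->
  (\sum_l a l * mu l) * (ln (\sum_l a l * mu l) - ln w) <=
    \sum_l a l * mu l * ln (mu l).
Proof.
move=> a_ge0 mu_ge0 r_le_w; set p := \sum_l a l * mu l; set r := \sum_l a l in r_le_w.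
have amu_ge0 l : 0 <= a l * mu l by rewrite mulr_ge0.
have [p0|p_neq0] := eqVneq p 0.
  rewrite p0 mul0r big1 // => l _.
  by rewrite (psumr_eq0P (fun l _ => amu_ge0 l) p0) ?mul0r.
have p_gt0 : 0 < p by rewrite lt_def p_neq0 sumr_ge0.
have r_gt0 : 0 < r.
  rewrite lt_def sumr_ge0 // andbT; apply: contraTneq p_gt0 => r0.
  rewrite /p big1 ?ltxx // => l _.
  by rewrite (psumr_eq0P (fun l _ => a_ge0 l) r0) ?mul0r.
have ln_r_le : ln r <= ln w by rewrite ler_ln ?posrE // (lt_le_trans r_gt0).
apply: le_trans (_ : p * (ln p - ln r) <= _).
  by rewrite ler_pM2l // lerD2l lerN2.
rewrite -subr_le0 {1}/p mulr_suml -sumrB.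
apply: le_trans (_ : \sum_l (a l * p / r - a l * mu l) <= 0).
  apply: ler_sum => l _; rewrite -mulrBr.
  have [->|mu_neq0] := eqVneq (mu l) 0.
    by rewrite !(mulr0, mul0r) subr0 divr_ge0 ?mulr_ge0 // ltW.
  have mu_gt0 : 0 < mu l by rewrite lt_def mu_neq0 mu_ge0.
  rewrite -!ln_div ?posrE ?divr_gt0 //.
  apply: le_trans (ler_wpM2l (amu_ge0 l) (ln_le_subr1 _)) _; first by rewrite !divr_gt0.
  by rewrite mulrBr mulr1 lerD2r mulrAC -mulrA divfK ?gt_eqF // mulrA.
by rewrite sumrB -!mulr_suml -/p -/r subr_le0 mulrC mulrA mulVf ?gt_eqF // mul1r.
Qed.

Lemma entropy_gap_le_ln (I K L : finType) (la : K -> R) (mu : L -> R)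
    (b : I -> K -> R) (a : I -> L -> R) (w : R) :
  (forall k, 0 <= la k) -> (forall l, 0 <= mu l) ->
  (forall i k, 0 <= b i k) -> (forall i l, 0 <= a i l) ->
  (forall k, \sum_i b i k = 1) -> (forall l, \sum_i a i l = 1) ->
  \sum_k la k = 1 ->
  (forall i, \sum_l a i l * mu l = \sum_k b i k * la k) ->
  (forall i, \sum_k b i k * la k ^+ 2 <= (\sum_k b i k * la k) ^+ 2) ->
  (forall i, \sum_l a i l <= w) ->
  \sum_k la k * ln (la k) - \sum_l mu l * ln (mu l) <= ln w.
Proof.
move=> la_ge0 mu_ge0 b_ge0 a_ge0 b_sum1 a_sum1 la_sum1 same_mass b_conc a_le_w.
pose p i := \sum_k b i k * la k.
have p_sum1 : \sum_i p i = 1.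
  rewrite exchange_big -la_sum1; apply: eq_bigr => k _.
  by rewrite -mulr_suml b_sum1 mul1r.
have la_split : \sum_k la k * ln (la k) = \sum_i \sum_k b i k * la k * ln (la k).
  rewrite exchange_big; apply: eq_bigr => k _.
  by rewrite -!mulr_suml b_sum1 mul1r.
have mu_split : \sum_l mu l * ln (mu l) = \sum_i \sum_l a i l * mu l * ln (mu l).
  rewrite exchange_big; apply: eq_bigr => l _.
  by rewrite -!mulr_suml a_sum1 mul1r.
rewrite la_split mu_split.
apply: le_trans (_ : \sum_i p i * ln (p i) - \sum_i p i * (ln (p i) - ln w) <= _).
  apply: lerB; apply: ler_sum => i _; first exact: weighted_xlnx_le.
  by rewrite /p -same_mass; apply: log_sum_le.
rewrite -sumrB (eq_bigr (fun i => p i * ln w)) => [|i _]; last by rewrite mulrBr subKr.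
by rewrite -mulr_suml p_sum1 mul1r.
Qed.

End EntropyInequalities.

Lemma mxtrace_pid (K : fieldType) n r : (r <= n)%N -> \tr (pid_mx r : 'M[K]_n) = r%:R.
Proof.
move=> le_rn; rewrite /mxtrace.
under eq_bigr do rewrite mxE eqxx /=.
rewrite -(big_mkord predT (fun i => (i < r)%:R)) (big_cat_nat (leq0n r) le_rn) /=.
rewrite [X in _ + X]big_nat_cond [X in _ + X]big1 ?addr0; last first.
  by move=> i /andP[/andP[le_ri _] _]; rewrite ltnNge le_ri.
rewrite big_nat_cond (eq_bigr (fun _ => 1)); last by move=> i /andP[/andP[_ ->]].
by rewrite -big_nat_cond sumr_const_nat subn0.
Qed.

(* P = L D R with L, R invertible and D = pid_mx (rank P); idempotence forces D (R L) D = D. *)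
Lemma mxtrace_idem (K : fieldType) n (P : 'M[K]_n) : P *m P = P -> \tr P = (\rank P)%:R.
Proof.
move=> P_idem; set L := col_ebase P; set Rb := row_ebase P.
set D : 'M[K]_n := pid_mx (\rank P).
have P_ebase : P = L *m D *m Rb by rewrite mulmx_ebase.
have uL : L \in unitmx := col_ebase_unit P.
have uR : Rb \in unitmx := row_ebase_unit P.
have D_idem : D *m D = D by rewrite mul_pid_mx minnn (minn_idPr (rank_leq_row P)).
have DRLD : D *m (Rb *m L) *m D = D.
  apply: (can_inj (mulKmx uL)); apply: (can_inj (mulmxK uR)).
  by rewrite !mulmxA; move: P_idem; rewrite P_ebase !mulmxA.
rewrite {1}P_ebase mxtrace_mulC mulmxA -D_idem mulmxA mxtrace_mulC mulmxA DRLD.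
by rewrite mxtrace_pid // rank_leq_row.
Qed.

Section Adjoint.
Variable R : realType.
Local Notation C := R[i].

Lemma adjmxE m p (A : 'M[C]_(m, p)) i j : adjmx A i j = (A j i)^*.
Proof. by rewrite !mxE. Qed.

Lemma adjmxK m p (A : 'M[C]_(m, p)) : adjmx (adjmx A) = A.
Proof. by apply/matrixP => i j; rewrite !adjmxE conjCK. Qed.

Lemma adjmxM m p q (A : 'M[C]_(m, p)) (B : 'M[C]_(p, q)) :
  adjmx (A *m B) = adjmx B *m adjmx A.
Proof. by rewrite /adjmx map_mxM trmx_mul. Qed.

Lemma adjmx_sum m p (I : finType) (A : I -> 'M[C]_(m, p)) :
  adjmx (\sum_i A i) = \sum_i adjmx (A i).
Proof.
apply/matrixP => i j; rewrite adjmxE !summxE rmorph_sum.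
by apply: eq_bigr => k _; rewrite adjmxE.
Qed.

Lemma unitary_adjmx n (U : 'M[C]_n) : unitary U -> adjmx U *m U = 1%:M.
Proof. exact: mulmx1C. Qed.

Lemma conjC_mul_ge0 (x : C) : 0 <= x^* * x.
Proof. by rewrite mulrC mul_conjC_ge0. Qed.

Lemma adjmx0 m p : adjmx (0 : 'M[C]_(m, p)) = 0.
Proof. by apply/matrixP => i j; rewrite !mxE rmorph0. Qed.

Lemma unitary_conjM n (U X Y : 'M[C]_n) : unitary U ->
  (adjmx U *m X *m U) *m (adjmx U *m Y *m U) = adjmx U *m (X *m Y) *m U.
Proof. by move=> U_unit; rewrite !mulmxA -(mulmxA _ U) U_unit mulmx1. Qed.

Lemma unitary_conjK n (U X : 'M[C]_n) : unitary U -> U *m (adjmx U *m X *m U) *m adjmx U = X.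
Proof. by move=> U_unit; rewrite !mulmxA U_unit mul1mx -mulmxA U_unit mulmx1. Qed.

Lemma unitary_conjVK n (U X : 'M[C]_n) : unitary U -> adjmx U *m (U *m X *m adjmx U) *m U = X.
Proof.
by move=> /unitary_adjmx U_unit; rewrite !mulmxA U_unit mul1mx -mulmxA U_unit mulmx1.
Qed.

Section Gram.
Variables (m n : nat) (X : 'M[C]_(m, n)).
Local Notation B := (adjmx X *m X).

Lemma gram_entry k l : B k l = \sum_t (X t k)^* * X t l.
Proof. by rewrite mxE; apply: eq_bigr => t _; rewrite adjmxE. Qed.

Lemma gram_entry_conj k l : B l k = (B k l)^*.
Proof.
rewrite !gram_entry rmorph_sum; apply: eq_bigr => t _.
by rewrite rmorphM /= conjCK mulrC.
Qed.

Lemma gram_diag_ge0 k : 0 <= B k k.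
Proof. by rewrite gram_entry sumr_ge0 // => t _; exact: conjC_mul_ge0. Qed.

Lemma mxtrace_gram_ge0 : 0 <= \tr B.
Proof. by apply: sumr_ge0 => k _; exact: gram_diag_ge0. Qed.

Lemma mxtrace_gram_eq0 : \tr B = 0 -> X = 0.
Proof.
move=> tr0; apply/matrixP => t k; rewrite mxE.
have Bkk0 := psumr_eq0P (fun k _ => gram_diag_ge0 k) tr0 (i := k) isT.
rewrite gram_entry in Bkk0.
have /eqP := psumr_eq0P (fun t _ => conjC_mul_ge0 (X t k)) Bkk0 (i := t) isT.
by rewrite mulf_eq0 conjC_eq0 orbb => /eqP.
Qed.

Lemma gram_entry_sqr_le k l : `|B k l| ^+ 2 <= B k k * B l l.
Proof.
have dotE i j : B i j = dotmx (row i (adjmx X)) (row j (adjmx X)).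
  rewrite dotmxE !mxE; apply: eq_bigr => t _; rewrite !mxE conjCK.
  by rewrite mulrC.
rewrite !dotE; exact: (CauchySchwarz (@dotmx _ m) _ _).1.
Qed.

(* Using B^2 = B, B^* = B and [B, diag c] = 0, the left side is sum_(k,l) |B_kl|^2 c_k c_l,
   which is termwise below the expansion sum_(k,l) B_kk B_ll c_k c_l of the right side. *)
Lemma gram_idem_diag_sqr_le (c : 'I_n -> C) :
  B *m B = B -> (forall k l, B k l * c l = c k * B k l) -> (forall k, 0 <= c k) ->
  \sum_k B k k * c k ^+ 2 <= (\sum_k B k k * c k) ^+ 2.
Proof.
move=> B_idem Bc c_ge0.
have -> : \sum_k B k k * c k ^+ 2 = \sum_k \sum_l `|B k l| ^+ 2 * (c k * c l).
  apply: eq_bigr => k _; rewrite -{1}B_idem mxE mulr_suml; apply: eq_bigr => l _.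
  by rewrite normCK -gram_entry_conj expr2 mulrA -(mulrA (B k l)) Bc; ring.
rewrite expr2 mulr_suml; apply: ler_sum => k _; rewrite mulr_sumr; apply: ler_sum => l _.
rewrite (_ : _ * _ * (_ * _) = B k k * B l l * (c k * c l)); last by ring.
by apply: ler_wpM2r; [rewrite mulr_ge0 | exact: gram_entry_sqr_le].
Qed.

End Gram.
End Adjoint.

Section Spectral.
Variables (R : realType) (n : nat).
Local Notation C := R[i].
Local Notation M := 'M[C]_n.

Lemma spectral_exists (A : M) : Defs.hermitian A -> exists U d, spectral A U d.
Proof.
move=> A_adj.
have A_herm : A \is hermsymmx.
  by apply/is_hermitianmxP; rewrite expr0 scale1r -map_trmx.
have A_spec := orthomx_spectralP (hermitian_normalmx A_herm).
have P_unitary : spectralmx A *m adjmx (spectralmx A) = 1%:M.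
  by rewrite /adjmx map_trmx; apply/unitarymxP/spectral_unitarymx.
have P_inv : invmx (spectralmx A) = adjmx (spectralmx A).
  rewrite -[invmx _]mulmx1 -P_unitary mulmxA mulVmx ?mul1mx //.
  exact: (mulmx1_unit P_unitary).1.
exists (adjmx (spectralmx A)), (map_mx (@complex.Re R) (spectral_diag A)); split.
  by rewrite /unitary adjmxK; apply: mulmx1C.
rewrite adjmxK {1}A_spec P_inv; congr (_ *m diag_mx _ *m _).
apply/matrixP => i j; rewrite !mxE RRe_real //.
by move/mxOverP: (hermitian_spectral_diag_real A_herm); apply.
Qed.

Lemma mxfun_spectral (f : R -> R) (A : M) : Defs.hermitian A ->
  exists U d, spectral A U d /\ mxfun f A = U *m diagf f d *m adjmx U.
Proof.
move=> /spectral_exists A_spec; rewrite /mxfun.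
case: excluded_middle_informative => [ex|nex]; last first.
  by exfalso; case: A_spec => U [d A_spec]; apply: nex; exists (U, d).
by case: constructive_indefinite_description => [[U d] /= A_spec']; exists U, d.
Qed.

Lemma spectral_conj (A U : M) d : spectral A U d -> adjmx U *m A *m U = diagR d.
Proof. by move=> [U_unit ->]; rewrite unitary_conjVK. Qed.

Lemma adjmx_diagf (f : R -> R) (d : 'rV[R]_n) : adjmx (diagf f d) = diagf f d.
Proof.
apply/matrixP => i j; rewrite !mxE rmorphMn eq_sym.
by case: eqVneq => [->|_]; rewrite ?mulr1n ?mulr0n //; exact: conjc_real.
Qed.

Lemma mxtrace_mul_conj_diag (A U : M) (c : 'rV[C]_n) :
  \tr (A *m (U *m diag_mx c *m adjmx U)) = \sum_l (adjmx U *m A *m U) l l * c 0 l.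
Proof.
rewrite !mulmxA mxtrace_mulC !mulmxA; apply: eq_bigr => l _.
by rewrite mul_mx_diag mxE.
Qed.

Lemma psd_conj_diag_ge0 (A : M) m (W : 'M[C]_(n, m)) l :
  psd A -> 0 <= (adjmx W *m A *m W) l l.
Proof.
case=> _ A_form; have := A_form (col l W).
rewrite !mxE (eq_bigr (fun a => (adjmx W *m A) l a * W a l)) // => a _.
by rewrite !mxE; congr (_ * _); apply: eq_bigr => b _; rewrite !mxE.
Qed.

Lemma psd_spectral_ge0 (A U : M) d k : psd A -> spectral A U d -> 0 <= d 0 k.
Proof.
move=> A_psd A_spec; have := psd_conj_diag_ge0 U k A_psd.
by rewrite (spectral_conj A_spec) !mxE eqxx mulr1n ler0c.
Qed.

Lemma psd_gram (A : M) : psd A -> exists S : M, A = adjmx S *m S.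
Proof.
move=> A_psd; have [U [d A_spec]] := spectral_exists A_psd.1.
exists (diagf Num.sqrt d *m adjmx U).
case: (A_spec) => _ ->.
rewrite adjmxM adjmxK adjmx_diagf !mulmxA -(mulmxA _ (diagf _ _) (diagf _ _)) mulmx_diag.
congr (_ *m diag_mx _ *m _); apply/rowP => j.
by rewrite !mxE -rmorphM -expr2 sqr_sqrtr // (psd_spectral_ge0 _ A_psd A_spec).
Qed.

Lemma diag_comm_fun (G : M) (d : 'rV[R]_n) (f : R -> R) :
  G *m diagR d = diagR d *m G -> G *m diagf f d = diagf f d *m G.
Proof.
move=> /matrixP G_comm; apply/matrixP => k l.
have := G_comm k l; rewrite !mul_mx_diag !mul_diag_mx !mxE.
have [->|G_kl] := eqVneq (G k l) 0; first by rewrite !(mulr0, mul0r).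
by rewrite mulrC => /(mulIf G_kl) /complexI ->; rewrite mulrC.
Qed.

Lemma spectral_fun_comm (A U P : M) d (f : R -> R) : spectral A U d ->
  P *m A = A *m P ->
  P *m (U *m diagf f d *m adjmx U) = (U *m diagf f d *m adjmx U) *m P.
Proof.
move=> A_spec PA_comm; have [U_unit _] := A_spec.
rewrite -[P *m _](unitary_conjK _ U_unit) -[_ *m P](unitary_conjK _ U_unit).
congr (U *m _ *m adjmx U).
rewrite -[LHS]unitary_conjM // -[RHS]unitary_conjM // unitary_conjVK // diag_comm_fun //.
by rewrite -(spectral_conj A_spec) !unitary_conjM // PA_comm.
Qed.

Lemma mxtrace_spectral (A U : M) d : spectral A U d -> \tr A = (\sum_k d 0 k)%:C%C.
Proof.
case=> /unitary_adjmx U_unit ->; rewrite mxtrace_mulC mulmxA U_unit mul1mx mxtrace_diag.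
by rewrite rmorph_sum; apply: eq_bigr => k _; rewrite mxE.
Qed.

Lemma mxtrace_spectral_fun (A U : M) d (f : R -> R) : spectral A U d ->
  \tr (A *m (U *m diagf f d *m adjmx U)) = (\sum_k d 0 k * f (d 0 k))%:C%C.
Proof.
move=> A_spec; rewrite mxtrace_mul_conj_diag (spectral_conj A_spec) rmorph_sum.
by apply: eq_bigr => k _; rewrite !mxE eqxx mulr1n rmorphM.
Qed.
End Spectral.

Section PVM.
Variables (R : realType) (n : nat) (I : finType) (E : I -> 'M[R[i]]_n).
Hypothesis E_pvm : is_PVM E.

Lemma pvm_adj i : adjmx (E i) = E i.
Proof. by case: E_pvm => proj _; case: (proj i). Qed.

Lemma pvm_idem i : E i *m E i = E i.
Proof. by case: E_pvm => proj _; case: (proj i). Qed.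

Lemma pvm_sum : \sum_i E i = 1%:M.
Proof. by case: E_pvm. Qed.

Lemma pvm_orth i j : i != j -> E i *m E j = 0.
Proof.
move=> neq_ij.
have gramE k : adjmx (E k *m E j) *m (E k *m E j) = E j *m E k *m E j.
  by rewrite adjmxM !pvm_adj mulmxA -(mulmxA (E j)) pvm_idem.
have : \sum_k E j *m E k *m E j = E j.
  by rewrite -mulmx_suml -mulmx_sumr pvm_sum mulmx1 pvm_idem.
rewrite (bigD1 j) //= !pvm_idem => /(congr1 (fun M => M - E j)).
rewrite addrC addrK subrr => sum0.
have tr0 : \sum_(k | k != j) \tr (adjmx (E k *m E j) *m (E k *m E j)) = 0.
  by under eq_bigr do rewrite gramE; rewrite -raddf_sum sum0 raddf0.
exact: mxtrace_gram_eq0 (psumr_eq0P (fun k _ => mxtrace_gram_ge0 _) tr0 neq_ij).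
Qed.

Lemma pvm_mul i j : E i *m E j = if i == j then E i else 0.
Proof. by case: eqVneq => [->|/pvm_orth//]; apply: pvm_idem. Qed.

End PVM.

Lemma pvm_le_comm (R : realType) n (I J : finType) (E : I -> 'M[R[i]]_n) (F : J -> 'M[R[i]]_n) :
  is_PVM E -> is_PVM F -> pvm_le E F -> forall i j, E i *m F j = F j *m E i.
Proof.
move=> E_pvm F_pvm E_le_F i j; have [S ->] := E_le_F i.
rewrite mulmx_suml mulmx_sumr; apply: eq_bigr => k _.
by rewrite !pvm_mul // eq_sym; case: eqVneq => [->|].
Qed.

Section Pinching.
Variables (R : realType) (n : nat) (J : finType) (F : J -> 'M[R[i]]_n).
Hypothesis F_pvm : is_PVM F.

Lemma pinch_comm rho j : pinch F rho *m F j = F j *m pinch F rho.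
Proof.
rewrite /pinch mulmx_suml mulmx_sumr; apply: eq_bigr => k _.
rewrite -mulmxA !pvm_mul // !mulmxA pvm_mul // eq_sym.
by case: eqVneq => [->|_]; rewrite ?mulmx0 ?mul0mx.
Qed.

Lemma mxtrace_pinch rho X : (forall j, X *m F j = F j *m X) ->
  \tr (pinch F rho *m X) = \tr (rho *m X).
Proof.
move=> X_comm; rewrite /pinch mulmx_suml raddf_sum /=.
under eq_bigr => j _ do
  rewrite -!mulmxA mxtrace_mulC -!mulmxA X_comm [F j *m (F j *m X)]mulmxA pvm_idem // mulmxA.
by rewrite -raddf_sum -mulmx_suml -mulmx_sumr pvm_sum // mulmx1.
Qed.

Lemma mxtrace_pinch_fun rho V mu (f : R -> R) : spectral (pinch F rho) V mu ->
  \tr (rho *m (V *m diagf f mu *m adjmx V)) = (\sum_l mu 0 l * f (mu 0 l))%:C%C.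
Proof.
move=> sigma_spec; rewrite -mxtrace_pinch ?mxtrace_spectral_fun // => j.
by symmetry; apply: spectral_fun_comm sigma_spec _; rewrite pinch_comm.
Qed.

Lemma psd_pinch rho : psd rho -> psd (pinch F rho).
Proof.
move=> [rho_adj rho_form]; split.
  rewrite /Defs.hermitian /pinch adjmx_sum; apply: eq_bigr => j _.
  by rewrite !adjmxM pvm_adj // rho_adj mulmxA.
move=> v; rewrite /pinch mulmx_sumr mulmx_suml summxE; apply: sumr_ge0 => j _.
by rewrite !mulmxA -{1}(pvm_adj F_pvm j) -adjmxM -mulmxA rho_form.
Qed.

(* If K sigma = 0 then sum_j |S F_j K^*|^2 = Tr K sigma K^* = 0, hence K F_j rho = 0. *)
Lemma kermx_pinch_sub rho : psd rho -> (kermx (pinch F rho) <= kermx rho)%MS.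
Proof.
move=> /psd_gram [S ->]; apply/sub_kermxP.
have := mulmx_ker (pinch F (adjmx S *m S)); move: (kermx _) => K K0.
pose Y j := S *m F j *m adjmx K.
have adjY j : adjmx (Y j) = K *m F j *m adjmx S.
  by rewrite !adjmxM adjmxK (pvm_adj F_pvm) mulmxA.
have : \sum_j \tr (adjmx (Y j) *m Y j) = 0.
  rewrite -raddf_sum (_ : \sum_j _ = K *m pinch F (adjmx S *m S) *m adjmx K).
    by rewrite K0 mul0mx raddf0.
  rewrite /pinch mulmx_sumr mulmx_suml; apply: eq_bigr => j _.
  by rewrite adjY /Y !mulmxA.
move=> /psumr_eq0P Ytr0.
rewrite -[K]mulmx1 -(pvm_sum F_pvm) mulmx_sumr !mulmx_suml big1 // => j _.
have /mxtrace_gram_eq0 Yj0 := Ytr0 (fun j _ => mxtrace_gram_ge0 (Y j)) j isT.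
by rewrite mulmxA -adjY Yj0 adjmx0 mul0mx.
Qed.

Lemma mxtrace_pvm_pinch (I : finType) (E : I -> 'M[R[i]]_n) rho i :
  is_PVM E -> pvm_le E F -> \tr (E i *m pinch F rho) = \tr (E i *m rho).
Proof.
move=> E_pvm E_le_F; rewrite mxtrace_mulC [RHS]mxtrace_mulC mxtrace_pinch // => j.
by rewrite (pvm_le_comm E_pvm F_pvm E_le_F).
Qed.

End Pinching.

Section PVMWeights.
Variables (R : realType) (n : nat) (I : finType) (E : I -> 'M[R[i]]_n) (U : 'M[R[i]]_n).

(* The weights b_ik (U diagonalising rho) and a_il (U diagonalising sigma) above. *)
Definition pvm_weight i k : R := complex.Re ((adjmx U *m E i *m U) k k).

Hypotheses (E_pvm : is_PVM E) (U_unit : unitary U).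

Lemma pvm_conj_gram i : adjmx U *m E i *m U = adjmx (E i *m U) *m (E i *m U).
Proof. by rewrite adjmxM pvm_adj // !mulmxA -(mulmxA _ (E i) (E i)) pvm_idem. Qed.

Lemma pvm_weightE i k : (adjmx U *m E i *m U) k k = (pvm_weight i k)%:C%C.
Proof.
rewrite /pvm_weight; have := gram_diag_ge0 (E i *m U) k; rewrite -pvm_conj_gram.
by case: (_ k k) => a b; rewrite lecE /= => /andP[/eqP -> _].
Qed.

Lemma pvm_weight_ge0 i k : 0 <= pvm_weight i k.
Proof. by rewrite -ler0c -pvm_weightE pvm_conj_gram gram_diag_ge0. Qed.

Lemma sum_pvm_weight k : \sum_i pvm_weight i k = 1.
Proof.
apply: complexI; rewrite rmorph_sum /=.
under eq_bigr do rewrite -pvm_weightE.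
by rewrite -summxE -mulmx_suml -mulmx_sumr pvm_sum // mulmx1 unitary_adjmx // mxE eqxx.
Qed.

Lemma sum_pvm_weight_rank i : \sum_k pvm_weight i k = (\rank (E i))%:R.
Proof.
apply: complexI; rewrite rmorph_sum rmorph_nat /=.
under eq_bigr do rewrite -pvm_weightE.
by rewrite -[\sum_k _]/(\tr _) mxtrace_mulC mulmxA U_unit mul1mx mxtrace_idem ?pvm_idem.
Qed.

Lemma mxtrace_pvm_spectral A d i : spectral A U d ->
  \tr (E i *m A) = (\sum_k pvm_weight i k * d 0 k)%:C%C.
Proof.
case=> _ ->; rewrite mxtrace_mul_conj_diag rmorph_sum.
by apply: eq_bigr => k _; rewrite pvm_weightE mxE rmorphM.
Qed.

Lemma sum_pvm_weight_sqr_le A d i : spectral A U d -> (forall k, 0 <= d 0 k) ->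
  E i *m A = A *m E i ->
  \sum_k pvm_weight i k * d 0 k ^+ 2 <= (\sum_k pvm_weight i k * d 0 k) ^+ 2.
Proof.
move=> A_spec d_ge0 EA_comm; rewrite -lecR rmorphXn !rmorph_sum /=.
under eq_bigr do rewrite rmorphM rmorphXn /= -pvm_weightE.
under [X in _ <= X ^+ 2]eq_bigr do rewrite rmorphM /= -pvm_weightE.
have B_comm : (adjmx U *m E i *m U) *m (adjmx U *m A *m U) =
              (adjmx U *m A *m U) *m (adjmx U *m E i *m U).
  by rewrite !unitary_conjM // EA_comm.
rewrite (spectral_conj A_spec) pvm_conj_gram in B_comm *.
apply: gram_idem_diag_sqr_le => [|k l|k]; last by rewrite ler0c.
  by rewrite -pvm_conj_gram unitary_conjM // pvm_idem.
by move/matrixP: B_comm => /(_ k l); rewrite mul_mx_diag mul_diag_mx !mxE.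
Qed.

End PVMWeights.

Theorem lemma10 (R : realType) (n : nat) (I J : finType)
    (E : I -> 'M[R[i]]_n) (F : J -> 'M[R[i]]_n) (rho : 'M[R[i]]_n) :
  is_PVM E -> is_PVM F -> pvm_le E F ->
  density rho -> commutes_with rho E ->
  (relent rho (pinch F rho) <= (ln ((width E)%:R : R))%:E)%E.
Proof.
move=> E_pvm F_pvm E_le_F [rho_psd tr_rho] rho_comm.
have sigma_psd := psd_pinch F_pvm rho_psd.
rewrite /relent kermx_pinch_sub // lee_fin /mxlog.
have [U [la [rho_spec ->]]] := mxfun_spectral (@ln R) rho_psd.1.
have [V [mu [sigma_spec ->]]] := mxfun_spectral (@ln R) sigma_psd.1.
rewrite mulmxBr raddfB /= (mxtrace_spectral_fun _ rho_spec).
rewrite (mxtrace_pinch_fun F_pvm _ sigma_spec) -rmorphB /=.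
have [[U_unit _] [V_unit _]] := (rho_spec, sigma_spec).
have la_ge0 k := psd_spectral_ge0 k rho_psd rho_spec.
apply: (entropy_gap_le_ln (b := pvm_weight E U) (a := pvm_weight E V)) => //.
- by move=> l; apply: psd_spectral_ge0 sigma_psd sigma_spec.
- exact: pvm_weight_ge0.
- exact: pvm_weight_ge0.
- exact: sum_pvm_weight.
- exact: sum_pvm_weight.
- by apply: complexI; rewrite -(mxtrace_spectral rho_spec) tr_rho.
- move=> i; apply: complexI.
  rewrite -(mxtrace_pvm_spectral E_pvm i sigma_spec) -(mxtrace_pvm_spectral E_pvm i rho_spec).
  exact: mxtrace_pvm_pinch.
- by move=> i; apply: (sum_pvm_weight_sqr_le E_pvm U_unit rho_spec); rewrite ?rho_comm.
- move=> i; rewrite sum_pvm_weight_rank // ler_nat.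
  exact: (leq_bigmax (F := fun i => \rank (E i))).
Qed.
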